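(* Let $G$ be a graph that has a proper VPG-representation $R_V$ in a $w\times h$-grid in which every vertex-path is $xy^+$-monotone. Then every subgraph $G'$ of $G$ has an $xy^+$-monotone EPG-representation in a $(2w+h)\times 2h$-grid.
   Context: The $w\times h$-grid consists of all grid-points $(i,j)$ with integer coordinates $1\le i\le w$, $1\le j\le h$, and all grid-edges joining grid-points at distance $1$. A vertex-path is a path in the grid. An EPG-representation of a graph $G$ assigns to each vertex $v$ a vertex-path $\mathrm{path}(v)$ such that $(v,w)$ is an edge of $G$ if and only if $\mathrm{path}(v)$ and $\mathrm{path}(w)$ share a grid-edge. A VPG-representation of $G$ assigns to each vertex a vertex-path such that $(v,w)$ is an edge if and only if $\mathrm{path}(v)$ and $\mathrm{path}(w)$ share a grid-point. A VPG-representation is proper if (a) every grid-edge is used by at most one vertex-path, and (b) whenever a grid-point $p$ belongs to both $\mathrm{path}(v)$ and $\mathrm{path}(w)$ ($v\neq w$), one of these two vertex-paths contains the grid-edge going rightward from $p$ and the other contains the grid-edge going upward from $p$. A vertex-path is $x$-monotone if every vertical line meeting it meets it in a single interval; it is $xy$-monotone if additionally every horizontal line meeting it meets it in a single interval; it is $xy^+$-monotone if it is $xy$-monotone and its left endpoint is not above its right endpoint (i.e., it is monotonically increasing). An ($xy^+$-monotone) EPG-representation is one in which all vertex-paths are ($xy^+$-monotone). *)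

From mathcomp Require Import all_boot.
Set Implicit Arguments. Unset Strict Implicit. Unset Printing Implicit Defensive.

(* Grid points are pairs (i, j) of naturals; .1 = x-coordinate, .2 = y-coordinate. *)
Definition point := (nat * nat)%type.

Definition in_grid (w h : nat) (p : point) : bool :=
  [&& 0 < p.1, p.1 <= w, 0 < p.2 & p.2 <= h].

Definition grid_adj (p q : point) : bool :=
  ((p.1 == q.1) && ((p.2 == q.2.+1) || (q.2 == p.2.+1))) ||
  ((p.2 == q.2) && ((p.1 == q.1.+1) || (q.1 == p.1.+1))).

Definition grid_path (w h : nat) (s : seq point) : Prop :=
  [/\ s != [::], uniq s, all (in_grid w h) s &
      forall i, i.+1 < size s -> grid_adj (nth (0,0) s i) (nth (0,0) s i.+1)].

Definition has_point (s : seq point) (p : point) : Prop := p \in s.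

Definition has_edge (s : seq point) (p q : point) : Prop :=
  exists i, i.+1 < size s /\
    ((nth (0,0) s i = p /\ nth (0,0) s i.+1 = q) \/
     (nth (0,0) s i = q /\ nth (0,0) s i.+1 = p)).

Definition share_point (s t : seq point) : Prop := exists p, p \in s /\ p \in t.

Definition share_edge (s t : seq point) : Prop :=
  exists p q, grid_adj p q /\ has_edge s p q /\ has_edge t p q.

(* x-monotone: every vertical line meets the path in a single interval, i.e.
   the indices of points with a given x-coordinate are contiguous. *)
Definition x_monotone (s : seq point) : Prop :=
  forall i j k, i <= j -> j <= k -> k < size s ->
    (nth (0,0) s i).1 = (nth (0,0) s k).1 ->
    (nth (0,0) s j).1 = (nth (0,0) s i).1.

Definition y_monotone (s : seq point) : Prop :=
  forall i j k, i <= j -> j <= k -> k < size s ->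
    (nth (0,0) s i).2 = (nth (0,0) s k).2 ->
    (nth (0,0) s j).2 = (nth (0,0) s i).2.

Definition xy_monotone (s : seq point) : Prop := x_monotone s /\ y_monotone s.

Definition xyplus_monotone (s : seq point) : Prop :=
  xy_monotone s /\
  let a := head (0,0) s in let b := last (0,0) s in
  (a.1 < b.1 -> a.2 <= b.2) /\ (b.1 < a.1 -> b.2 <= a.2).

Definition right_of (p : point) : point := (p.1.+1, p.2).
Definition up_of (p : point) : point := (p.1, p.2.+1).

Definition proper_VPG_rep (V : finType) (e : rel V) (w h : nat)
    (path : V -> seq point) : Prop :=
  [/\ forall v, grid_path w h (path v),
      forall u v, u != v -> (e u v <-> share_point (path u) (path v)),
      forall u v p q, u != v -> grid_adj p q ->
        has_edge (path u) p q -> has_edge (path v) p q -> False &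
      forall u v p, u != v -> p \in path u -> p \in path v ->
        (has_edge (path u) p (right_of p) /\ has_edge (path v) p (up_of p)) \/
        (has_edge (path u) p (up_of p) /\ has_edge (path v) p (right_of p))].

Definition EPG_rep (V : finType) (S : {set V}) (e' : rel V) (w h : nat)
    (path : V -> seq point) : Prop :=
  (forall v, v \in S -> grid_path w h (path v)) /\
  (forall u v, u \in S -> v \in S -> u != v ->
     (e' u v <-> share_edge (path u) (path v))).

From mathcomp Require Import all_boot zify.
Set Implicit Arguments. Unset Strict Implicit. Unset Printing Implicit Defensive.

(* An xy^+-monotone grid path is, up to reversal, a staircase of right and up
   steps. Send the grid-point (i, j) to (2i + j, 2j): a right step becomes two
   right steps, an up step becomes a three-step detour through the 2x2 block
   above the image, either right-up-up or up-right-up. In a proper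
   VPG-representation two paths meet only where one leaves rightwards and the
   other upwards; if the two vertices are adjacent in G', the upward one takes
   the right-up-up detour, so both use the grid-edge from the image point to
   its right neighbour. Every other grid-edge of an image path lies inside a
   block that it would have to share with a second path, which is impossible
   because no grid-edge is shared and no three paths meet in a point. *)

Definition unit_steps (f : nat -> nat) (n : nat) : Prop :=
  forall k, k.+1 < n -> f k.+1 <= (f k).+1 /\ f k <= (f k.+1).+1.

Definition contiguous_levels (f : nat -> nat) (n : nat) : Prop :=
  forall i j k, i <= j -> j <= k -> k < n -> f i = f k -> f j = f i.

Section UnitSteps.
Variables (f : nat -> nat) (n : nat).
Hypothesis f_steps : unit_steps f n.

Lemma unit_steps_ivt a b c : a <= b < n -> minn (f a) (f b) <= c <= maxn (f a) (f b) ->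
  exists2 m, a <= m <= b & f m = c.
Proof.
elim: b => [|b IH] /andP[ab bn] hc.
  by move: ab hc; rewrite leqn0 => /eqP -> hc; exists 0 => //; lia.
have [-> | ne] := eqVneq c (f b.+1); first by exists b.+1; rewrite ?ab ?leqnn.
have [s1 s2] := f_steps bn.
have ab' : a <= b.
  by move: ab; rewrite leq_eqVlt => /orP[/eqP E|//]; move: hc ne; rewrite E; lia.
have hc' : minn (f a) (f b) <= c <= maxn (f a) (f b) by lia.
have [|m /andP[am mb] fm] := IH _ hc'; first by rewrite ab' ltnW.
by exists m; rewrite ?am ?(leq_trans mb).
Qed.

Hypothesis f_levels : contiguous_levels f n.

Lemma contiguous_levels_between i j k : i <= j -> j <= k -> k < n ->
  minn (f i) (f k) <= f j <= maxn (f i) (f k).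
Proof.
move=> ij jk kn.
case Hi: (minn (f j) (f k) <= f i <= maxn (f j) (f k)).
  have [|m /andP[jm mk] fm] := unit_steps_ivt _ Hi; first by rewrite jk.
  have := f_levels ij jm (leq_ltn_trans mk kn) (esym fm); lia.
case Hk: (minn (f i) (f j) <= f k <= maxn (f i) (f j)).
  have [|m /andP[im mj] fm] := unit_steps_ivt _ Hk; first by rewrite ij (leq_ltn_trans jk).
  have := f_levels mj jk kn fm; lia.
move: Hi Hk; lia.
Qed.

Lemma contiguous_levels_monotone :
  (forall i j, i <= j < n -> f i <= f j) \/ (forall i j, i <= j < n -> f j <= f i).
Proof.
have btw := contiguous_levels_between.
case: (leqP (f 0) (f n.-1)) => h; [left | right] => i j /andP[ij jn];
  have := btw 0 i j (leq0n i) ij jn; have := btw i j n.-1 ij (_ : j <= n.-1) (_ : n.-1 < n);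
  lia.
Qed.

End UnitSteps.

Definition stair_step (p q : point) : bool := (q == right_of p) || (q == up_of p).

Definition le_pt (p q : point) : bool := (p.1 <= q.1) && (p.2 <= q.2).

Lemma stair_stepE p q :
  stair_step p q = ((q.1 == p.1.+1) && (q.2 == p.2)) || ((q.1 == p.1) && (q.2 == p.2.+1)).
Proof. by case: p q => [p1 p2] [q1 q2]; rewrite /stair_step /right_of /up_of !xpair_eqE. Qed.

Lemma staircase_uniq s : sorted stair_step s -> uniq s.
Proof.
move=> st; apply: (@sorted_uniq _ (fun p q : point => p.1 + p.2 < q.1 + q.2)).
- by move=> ? ? ?; lia.
- by move=> ?; lia.
- by apply: sub_sorted st => p q; rewrite stair_stepE; lia.
Qed.

Lemma staircase_le_nth s i j : sorted stair_step s -> i <= j -> j < size s ->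
  le_pt (nth (0,0) s i) (nth (0,0) s j).
Proof.
move=> st ij js; have le_st : sorted le_pt s.
  by apply: sub_sorted st => p q; rewrite stair_stepE /le_pt; lia.
apply: (sorted_leq_nth _ _ _ le_st) => //; rewrite ?inE; try lia.
- by move=> ? ? ?; rewrite /le_pt; lia.
- by move=> ?; rewrite /le_pt; lia.
Qed.

Lemma staircase_xyplus s : sorted stair_step s -> xyplus_monotone s.
Proof.
move=> st; split.
  by split=> i j k ij jk ks; have := staircase_le_nth st ij (leq_ltn_trans jk ks);
    have := staircase_le_nth st jk ks; rewrite /le_pt; lia.
case: s st => [//|a t] st /=.
have := staircase_le_nth st (leq0n (size t)) (ltnSn _).
by rewrite nth_last /le_pt /=; lia.
Qed.

Lemma staircase_grid_path w h s : s != [::] -> sorted stair_step s ->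
  in_grid w h (head (0,0) s) -> in_grid w h (last (0,0) s) -> grid_path w h s.
Proof.
move=> s0 st hd tl; split => //; first exact: staircase_uniq.
- apply/allP => p ps; have ip : index p s < size s by rewrite index_mem.
  have := staircase_le_nth st (leq0n _) ip.
  have := staircase_le_nth st (_ : index p s <= (size s).-1) (_ : (size s).-1 < size s).
  rewrite nth_index // nth0 nth_last; move: hd tl; rewrite /in_grid /le_pt; lia.
- move=> i /(sortedP (0,0) st); rewrite stair_stepE /grid_adj; lia.
Qed.

Lemma xyplus_staircase s :
  (forall i, i.+1 < size s -> grid_adj (nth (0,0) s i) (nth (0,0) s i.+1)) ->
  xyplus_monotone s -> sorted stair_step s \/ sorted stair_step (rev s).
Proof.
move=> adj [[xm ym] /= [ends1 ends2]].
move: ends1 ends2; rewrite -nth0 -nth_last => ends1 ends2.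
pose x k := (nth (0,0) s k).1; pose y k := (nth (0,0) s k).2.
have xs : unit_steps x (size s) by move=> k /adj; rewrite /x /grid_adj; lia.
have ys : unit_steps y (size s) by move=> k /adj; rewrite /y /grid_adj; lia.
pose incr f := forall i j, i <= j < size s -> f i <= f j.
pose decr f := forall i j, i <= j < size s -> f j <= f i.
have [[xi yi]|[xd yd]] : (incr x /\ incr y) \/ (decr x /\ decr y).
  have [xi|xd] := contiguous_levels_monotone xs xm;
  have [yi|yd] := contiguous_levels_monotone ys ym;
  [by left | | | by right].
  (* In the mixed cases the endpoint condition makes one coordinate constant. *)
  + case: (ltnP (x 0) (x (size s).-1)) => h; [left | right]; split=> // i j /andP[ij js];
    have := xi 0 i; have := xi j (size s).-1; have := yd 0 i; have := yd j (size s).-1;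
    rewrite /x /y in h *; lia.
  + case: (ltnP (x (size s).-1) (x 0)) => h; [right | left]; split=> // i j /andP[ij js];
    have := xd 0 i; have := xd j (size s).-1; have := yi 0 i; have := yi j (size s).-1;
    rewrite /x /y in h *; lia.
- by left; apply/(sortedP (0,0)) => k kk; have := adj k kk; have := xi k k.+1;
    have := yi k k.+1; rewrite stair_stepE /grid_adj /x /y; lia.
- right; rewrite rev_sorted; apply/(sortedP (0,0)) => k kk; have := adj k kk;
    have := xd k k.+1; have := yd k k.+1; rewrite stair_stepE /grid_adj /x /y; lia.
Qed.

Lemma has_edge_cons x y t p q : has_edge [:: x, y & t] p q <->
  ((x = p /\ y = q) \/ (x = q /\ y = p)) \/ has_edge (y :: t) p q.
Proof.
split=> [[[|i] [lt H]] | [H | [i [lt H]]]]; first by left.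
- by right; exists i.
- by exists 0.
- by exists i.+1.
Qed.

Lemma has_edge_head x y t : has_edge [:: x, y & t] x y.
Proof. by exists 0; split=> //; left. Qed.

Lemma has_edge1 x p q : ~ has_edge [:: x] p q.
Proof. by case=> i []. Qed.

Lemma has_edge_catl s t p q : has_edge t p q -> has_edge (s ++ t) p q.
Proof. by elim: s => //= x s IH /IH [i [lt H]]; exists i.+1. Qed.

Lemma has_edge_mem s p q : has_edge s p q -> p \in s /\ q \in s.
Proof.
case=> i [lt H]; have m1 := mem_nth (0,0) lt; have m2 := mem_nth (0,0) (ltnW lt).
by case: H => [[<- <-] | [<- <-]].
Qed.

Lemma has_edge_rev s p q : has_edge (rev s) p q <-> has_edge s p q.
Proof.
suff rev_edge t : has_edge t p q -> has_edge (rev t) p q.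
  by split=> /rev_edge; rewrite ?revK.
case=> i [lt H]; exists (size t - i.+2); rewrite size_rev; split; first by lia.
have sizeE : @size point t = @size (nat * nat) t by [].
rewrite sizeE in lt *; rewrite !nth_rev; try lia.
have -> : size t - (size t - i.+2).+1 = i.+1 by lia.
have -> : size t - (size t - i.+2).+2 = i by lia.
by case: H => [[-> ->] | [-> ->]]; [right | left].
Qed.

Definition orient (s : seq point) : seq point := if sorted stair_step s then s else rev s.

Lemma mem_orient s : orient s =i s.
Proof. by rewrite /orient; case: ifP => // _ c; rewrite mem_rev. Qed.

Lemma has_edge_orient s p q : has_edge (orient s) p q <-> has_edge s p q.
Proof. by rewrite /orient; case: ifP => // _; apply: has_edge_rev. Qed.

Lemma orient_eq0 s : (orient s == [::]) = (s == [::]).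
Proof. by rewrite /orient; case: ifP => // _; rewrite -!size_eq0 size_rev. Qed.

Lemma sorted_orient s :
  sorted stair_step s \/ sorted stair_step (rev s) -> sorted stair_step (orient s).
Proof. by rewrite /orient; case: ifP => // _ []. Qed.

(* The four corners of the 2x2 block at the image of c, indexed by k. *)
Definition emb_at (k : bool * bool) (c : point) : point :=
  (2 * c.1 + c.2 + k.1, 2 * c.2 + k.2).

Notation emb := (emb_at (false, false)).
Notation emb_r := (emb_at (true, false)).
Notation emb_u := (emb_at (false, true)).
Notation emb_ru := (emb_at (true, true)).

Lemma emb_at_inj k l c d : emb_at k c = emb_at l d -> k = l /\ c = d.
Proof.
case: k l c d => [[] []] [[] []] [c1 c2] [d1 d2] [] /= h1 h2;
  have [e1 e2] : c1 = d1 /\ c2 = d2 by lia.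
all: by [subst | lia].
Qed.

Lemma emb_nonadj c d : ~~ grid_adj (emb c) (emb d).
Proof. by rewrite /grid_adj /=; lia. Qed.

Lemma in_grid_emb w h c : in_grid w h c -> in_grid (2 * w + h) (2 * h) (emb c).
Proof. by rewrite /in_grid /=; lia. Qed.

Lemma up_neq_right c : (up_of c == right_of c) = false.
Proof. by case: c => c1 c2; rewrite /up_of /right_of xpair_eqE /=; lia. Qed.

(* An up step from a is routed right-up-up exactly when r a holds. *)
Definition link (r : pred point) (a b : point) : seq point :=
  if b == right_of a then [:: emb_r a]
  else if r a then [:: emb_r a; emb_ru a] else [:: emb_u a; emb_ru a].

Fixpoint route_tail (r : pred point) (a : point) (t : seq point) : seq point :=
  if t is b :: t' then link r a b ++ emb b :: route_tail r b t' else [::].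

Definition route (r : pred point) (s : seq point) : seq point :=
  if s is a :: t then emb a :: route_tail r a t else [::].

Lemma sorted_route r s : sorted stair_step s -> sorted stair_step (route r s).
Proof.
case: s => //= a t; elim: t a => //= b t IH a /andP[ab /IH]; rewrite cat_path /= => ->.
rewrite andbT /link; case/orP: ab => /eqP ->; rewrite ?eqxx ?up_neq_right;
  [| case: (r a)]; by rewrite /= !stair_stepE /=; lia.
Qed.

Lemma last_route_tail r a t : last (emb a) (route_tail r a t) = emb (last a t).
Proof. by elim: t a => //= b t IH a; rewrite last_cat /= IH. Qed.

Lemma route_grid_path w h r s : s != [::] -> sorted stair_step s -> all (in_grid w h) s ->
  grid_path (2 * w + h) (2 * h) (route r s).
Proof.
case: s => // a t _ st /allP ins; apply: staircase_grid_path; rewrite ?sorted_route //=.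
- by rewrite in_grid_emb // ins ?mem_head.
- by rewrite last_route_tail in_grid_emb // ins ?mem_last.
Qed.

Definition corner_used (r : pred point) (s : seq point) (k : bool * bool) (c : point) : Prop :=
  match k with
  | (false, false) => c \in s
  | (true, false) => has_edge s c (right_of c) \/ has_edge s c (up_of c) /\ r c
  | (_, true) => has_edge s c (up_of c)
  end.

Lemma corner_used_cons r x s k c : corner_used r s k c -> corner_used r (x :: s) k c.
Proof.
have ext := @has_edge_catl [:: x] s.
case: k => [[] []] /=; [exact: ext | | exact: ext | by rewrite inE orbC => ->].
by case=> [/ext | [/ext]]; [left | right].
Qed.

Lemma corner_used_orient r s k c : corner_used r (orient s) k c <-> corner_used r s k c.
Proof.
by case: k => [[] []] /=; rewrite ?mem_orient ?has_edge_orient.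
Qed.

Lemma mem_route r s z : sorted stair_step s -> z \in route r s ->
  exists k c, z = emb_at k c /\ corner_used r s k c.
Proof.
case: s => //= a t; elim: t a => [|b t IH] a /=.
  by move=> _; rewrite inE => /eqP ->; exists (false, false), a; rewrite /= mem_head.
move=> /andP[ab pt]; rewrite in_cons mem_cat => /or3P[/eqP -> | zl | /(IH b pt)].
- by exists (false, false), a; rewrite /= mem_head.
- have := has_edge_head a b t; move: zl.
  case/orP: ab => /eqP ->; rewrite /link ?eqxx ?up_neq_right.
    by rewrite inE => /eqP -> ha; exists (true, false), a; split=> //; left.
  case: ifP => ra; rewrite !inE => /orP[] /eqP -> ha;
    [exists (true, false), a | exists (true, true), a
    | exists (false, true), a | exists (true, true), a]; split=> //=; by right.
- by case=> k [c [-> used]]; exists k, c; split=> //; apply: corner_used_cons.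
Qed.

Lemma has_edge_route_right r s c : sorted stair_step s -> corner_used r s (true, false) c ->
  has_edge (route r s) (emb c) (emb_r c).
Proof.
case: s => [_ [[? []] | [[? []]]] // | a t] /=.
elim: t a => [|b t IH] a; first by move=> _ [/has_edge1 | [/has_edge1]].
move=> /= /andP[ab pt] H.
have [[<- [-> | [-> rc]]] | later] :
    a = c /\ (b = right_of c \/ b = up_of c /\ r c) \/ corner_used r (b :: t) (true, false) c.
  case: H => [/has_edge_cons | [/has_edge_cons E rc]].
    move=> [[[-> ->] | [Ea Eb]] | ?]; [by left; split=> //; left | | by right; left].
    by move: ab; rewrite Ea Eb stair_stepE /right_of /=; lia.
  move: E => [[[-> ->] | [Ea Eb]] | ?]; [by left; split=> //; right | | by right; right].
  by move: ab; rewrite Ea Eb stair_stepE /up_of /=; lia.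
- by rewrite /link eqxx; apply: has_edge_head.
- by rewrite /link up_neq_right rc; apply: has_edge_head.
- by rewrite -cat_cons; apply: has_edge_catl; apply: IH.
Qed.

Lemma grid_adj_right c : grid_adj c (right_of c).
Proof. by rewrite /grid_adj /=; lia. Qed.

Lemma grid_adj_up c : grid_adj c (up_of c).
Proof. by rewrite /grid_adj /=; lia. Qed.

Section Rerouting.
Variables (V : finType) (w h : nat) (RV : V -> seq point) (e' : rel V).
Hypothesis RV_path : forall v, grid_path w h (RV v).
Hypothesis RV_mono : forall v, xyplus_monotone (RV v).
Hypothesis RV_edge_disjoint : forall u v p q, u != v -> grid_adj p q ->
  has_edge (RV u) p q -> has_edge (RV v) p q -> False.
Hypothesis RV_cross : forall u v p, u != v -> p \in RV u -> p \in RV v ->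
  (has_edge (RV u) p (right_of p) /\ has_edge (RV v) p (up_of p)) \/
  (has_edge (RV u) p (up_of p) /\ has_edge (RV v) p (right_of p)).
Hypothesis e'_sym : symmetric e'.

Lemma no_three_paths_meet u v x c : u != v -> v != x -> x != u ->
  c \in RV u -> c \in RV v -> c \in RV x -> False.
Proof.
move=> uv vx xu cu cv cx; have R := grid_adj_right c; have U := grid_adj_up c.
case: (RV_cross uv cu cv) => [[? ?] | [? ?]]; case: (RV_cross vx cv cx) => [[? ?] | [? ?]].
- by apply: (RV_edge_disjoint uv R).
- by apply: (RV_edge_disjoint xu R).
- by apply: (RV_edge_disjoint xu U).
- by apply: (RV_edge_disjoint vx R).
Qed.

Definition crossed_by_neighbour (v : V) (c : point) : bool :=
  [exists u, [&& u != v, c \in RV u & e' u v]].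

Definition route_of (v : V) : seq point := route (crossed_by_neighbour v) (orient (RV v)).

Lemma sorted_orient_RV v : sorted stair_step (orient (RV v)).
Proof. by case: (RV_path v) => _ _ _ adj; apply/sorted_orient/xyplus_staircase. Qed.

Lemma route_of_grid_path v : grid_path (2 * w + h) (2 * h) (route_of v).
Proof.
case: (RV_path v) => ne _ /allP ins _.
apply: route_grid_path; rewrite ?orient_eq0 ?sorted_orient_RV //.
by apply/allP => c; rewrite mem_orient; apply: ins.
Qed.

Lemma route_of_xyplus v : xyplus_monotone (route_of v).
Proof. exact/staircase_xyplus/sorted_route/sorted_orient_RV. Qed.

Lemma mem_route_of v z : z \in route_of v ->
  exists k c, z = emb_at k c /\ corner_used (crossed_by_neighbour v) (RV v) k c.
Proof.
move/(mem_route (sorted_orient_RV v)) => [k [c [-> used]]].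
by exists k, c; split=> //; apply/corner_used_orient.
Qed.

Lemma has_edge_route_of v c : corner_used (crossed_by_neighbour v) (RV v) (true, false) c ->
  has_edge (route_of v) (emb c) (emb_r c).
Proof. by move/corner_used_orient; apply: has_edge_route_right (sorted_orient_RV v). Qed.

Lemma crossing_share_edge u v c : u != v -> e' u v -> c \in RV u -> c \in RV v ->
  share_edge (route_of u) (route_of v).
Proof.
move=> uv e'uv cu cv; exists (emb c), (emb_r c); split; first by rewrite /grid_adj /=; lia.
case: (RV_cross uv cu cv) => [[Ru Uv] | [Uu Rv]]; split; apply: has_edge_route_of.
- by left.
- by right; split=> //; apply/existsP; exists u; rewrite uv cu e'uv.
- by right; split=> //; apply/existsP; exists v; rewrite eq_sym uv cv e'_sym.
- by left.
Qed.

Lemma corner_shared u v k c : u != v -> k != (false, false) ->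
  corner_used (crossed_by_neighbour u) (RV u) k c ->
  corner_used (crossed_by_neighbour v) (RV v) k c -> e' u v.
Proof.
have up_excl x y : x != y -> has_edge (RV x) c (up_of c) -> has_edge (RV y) c (up_of c) -> False.
  by move=> xy; apply: RV_edge_disjoint xy (grid_adj_up c).
have right_up x y : x != y -> has_edge (RV x) c (right_of c) -> c \in RV y ->
    crossed_by_neighbour y c -> e' x y.
  move=> xy Rx cy /existsP[z /and3P[zy cz e'zy]]; have [<- // | zx] := eqVneq z x.
  by case: (no_three_paths_meet xy (_ : y != z) zx (has_edge_mem Rx).1 cy cz); rewrite eq_sym.
move=> uv; case: k => [[] []] //= _; try by move=> Uu Uv; case: (up_excl u v uv Uu Uv).
case=> [Ru | [Uu ru]] [Rv | [Uv rv]].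
- by case: (RV_edge_disjoint uv (grid_adj_right c) Ru Rv).
- exact: right_up uv Ru (has_edge_mem Uv).1 rv.
- by rewrite e'_sym; apply: right_up _ Rv (has_edge_mem Uu).1 ru; rewrite eq_sym.
- by case: (up_excl u v uv Uu Uv).
Qed.

Lemma share_edge_route_of u v : u != v -> share_edge (route_of u) (route_of v) -> e' u v.
Proof.
move=> uv [p [q [pq [Eu Ev]]]].
have [[pu qu] [pv qv]] := (has_edge_mem Eu, has_edge_mem Ev).
have [k [c [zu zv k0 used_u]]] : exists k c, [/\ emb_at k c \in route_of u,
    emb_at k c \in route_of v, k != (false, false)
  & corner_used (crossed_by_neighbour u) (RV u) k c].
  have [k [c [Ep used_p]]] := mem_route_of pu; have [l [d [Eq used_q]]] := mem_route_of qu.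
  have [k0 | k0] := eqVneq k (false, false); last by exists k, c; rewrite -Ep.
  have [l0 | l0] := eqVneq l (false, false); last by exists l, d; rewrite -Eq.
  by move: pq; rewrite Ep Eq k0 l0 (negbTE (emb_nonadj c d)).
have [l [d [/emb_at_inj [<- <-] used_v]]] := mem_route_of zv.
exact: corner_shared uv k0 used_u used_v.
Qed.

End Rerouting.

Theorem lemma2 (V : finType) (e : rel V) (w h : nat)
    (e_sym : symmetric e) (e_irr : irreflexive e)
    (RV : V -> seq point)
    (HRV : proper_VPG_rep e w h RV)
    (Hmono : forall v, xyplus_monotone (RV v))
    (S : {set V}) (e' : rel V)
    (e'_sym : symmetric e')
    (e'_sub : forall u v, e' u v -> [&& u \in S, v \in S & e u v]) :
  exists path' : V -> seq point,
    EPG_rep S e' (2 * w + h) (2 * h) path' /\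
    (forall v, v \in S -> xyplus_monotone (path' v)).
Proof.
case: HRV => RV_path RV_share RV_edge RV_cross.
exists (route_of RV e'); split; last by move=> v _; apply: route_of_xyplus RV_path Hmono v.
split=> [v _ | u v _ _ uv]; first exact: route_of_grid_path RV_path Hmono v.
split=> [e'uv | ]; last exact: share_edge_route_of RV_path Hmono RV_edge RV_cross e'_sym u v uv.
have /and3P[_ _ /(RV_share _ _ uv).1 [c [cu cv]]] := e'_sub _ _ e'uv.
exact: crossing_share_edge RV_path Hmono RV_cross e'_sym u v c uv e'uv cu cv.
Qed.
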